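(* Let $p$ be a prime. Every group of order $p$, $p^2$ or $p^3$ has the property that each of its non-abelian subgroups $H$ satisfies $C_G(H)\le H$. A group $G$ of order $p^4$ has this property if and only if $G$ is abelian, or $G$ has maximal class (nilpotency class $3$), or $\Phi(G)=Z(G)$.
   Context: $C_G(H)$ denotes the centralizer of $H$ in $G$, $\Phi(G)$ the Frattini subgroup and $Z(G)$ the center. *)

From mathcomp Require Import all_boot all_fingroup all_solvable.
Set Implicit Arguments. Unset Strict Implicit. Unset Printing Implicit Defensive.
Local Open Scope group_scope.

Definition nonab_selfcent (gT : finGroupType) (G : {group gT}) : Prop :=
  forall H : {group gT}, H \subset G -> ~~ abelian H -> 'C_G(H) \subset H.

From mathcomp Require Import all_boot all_fingroup all_solvable.
From mathcomp Require Import zify.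
Set Implicit Arguments. Unset Strict Implicit. Unset Printing Implicit Defensive.
Local Open Scope group_scope.

(* A non-abelian subgroup of a p-group has order at least p^3, so in a group
   of order at most p^3 it is the whole group, and in a group G of order p^4
   it is G or a maximal subgroup M. For a maximal normal M, C_G(M) <= M holds
   iff Z(G) <= M; otherwise G = M * Z(G) is a central product, so G and M have
   the same derived subgroup and Z(M) <= Z(G). Hence if G has class 3 (so M,
   of order p^3, has class at most 2), or if Z(G) = Phi(G), every maximal
   subgroup contains Z(G). Conversely, if G is non-abelian of class 2 with the
   property, Z(G) lies in every maximal subgroup, i.e. Z(G) <= Phi(G); as
   G/Z(G) and G/Phi(G) are not cyclic both have order at most p^2, and when
   |Z(G)| = p the identity [x^p, y] = [x, y]^p = 1 gives Phi(G) <= Z(G). *)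

Section MaximalSubgroup.

Variables (gT : finGroupType) (G M : {group gT}).
Hypotheses (nsMG : M <| G) (maxM : maximal M G).

Lemma subcent_maximal_sub : ('C_G(M) \subset M) = ('Z(G) \subset M).
Proof.
apply/idP/idP=> [sCM | sZM].
  by apply: subset_trans sCM; rewrite setIS // centS // normal_sub.
apply/subsetP=> x /setIP[Gx cMx]; apply/negPn/negP=> notMx.
have defG: M * <[x]> = G.
  by apply: mulg_normal_maximal; rewrite ?cycle_subG.
case/negP: notMx; apply: (subsetP sZM); rewrite inE Gx -defG centM inE cMx.
by rewrite cent_cycle cent1id.
Qed.

Hypothesis notsZM : ~~ ('Z(G) \subset M).

Lemma maximal_center_cprod : M \* 'Z(G) = G.
Proof.
rewrite cprodE; first exact: mulg_normal_maximal (center_sub G) notsZM.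
by rewrite subIset // centS ?orbT ?normal_sub.
Qed.

Lemma der1_maximal_center : G^`(1) = M^`(1).
Proof.
have /cprodP[_ <- _] := der_cprod 1 maximal_center_cprod.
by rewrite (derG1P (center_abelian G)) mulg1.
Qed.

Lemma center_maximal_sub : 'Z(M) \subset 'Z(G).
Proof.
have /cprodP[_ <- _] := center_cprod maximal_center_cprod.
exact: mulG_subl.
Qed.

Lemma abelian_maximal_center : abelian M -> abelian G.
Proof. by move/derG1P=> M'1; apply/derG1P; rewrite der1_maximal_center. Qed.

Lemma nil_class2_maximal_center : nil_class M <= 2 -> nil_class G <= 2.
Proof.
rewrite !nil_class2 der1_maximal_center => sM'Z.
exact: subset_trans sM'Z center_maximal_sub.
Qed.

End MaximalSubgroup.

Lemma center_sub_Phi (gT : finGroupType) (G : {group gT}) :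
  (forall M : {group gT}, maximal M G -> 'Z(G) \subset M) ->
  'Z(G) \subset 'Phi(G).
Proof.
move=> sZmax; apply/bigcapsP=> M /orP[/eqP-> | /sZmax //].
exact: center_sub.
Qed.

Lemma card_pfactor_pgroup (gT : finGroupType) (p k : nat) (G : {group gT}) :
  prime p -> #|G| = (p ^ k)%N -> p.-group G /\ logn p #|G| = k.
Proof. by move=> pr_p oG; rewrite /pgroup oG pnatX pnat_id // pfactorK. Qed.

Section PGroup.

Variables (gT : finGroupType) (p : nat) (G : {group gT}).
Hypotheses (pr_p : prime p) (pG : p.-group G).

Lemma logn_nonabelian_gt2 : ~~ abelian G -> 2 < logn p #|G|.
Proof. by rewrite ltnNge; apply: contra; apply: p2group_abelian. Qed.

Lemma sub_pgroup_logn_eq (H : {group gT}) :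
  H \subset G -> logn p #|G| <= logn p #|H| -> H :=: G.
Proof.
move=> sHG leGH; apply/eqP; rewrite eqEcard sHG (card_pgroup pG).
by rewrite (card_pgroup (pgroupS sHG pG)) leq_exp2l ?prime_gt1.
Qed.

Lemma sub_pgroup_maximal (H : {group gT}) :
  H \subset G -> logn p #|G| = (logn p #|H|).+1 -> maximal H G.
Proof.
move=> sHG lGH; apply: p_index_maximal => //.
have /eqP: (#|H| * #|G : H| = #|H| * p)%N.
  rewrite Lagrange // (card_pgroup pG) (card_pgroup (pgroupS sHG pG)) lGH.
  by rewrite expnSr.
by rewrite eqn_pmul2l ?cardG_gt0 // => /eqP->.
Qed.

Lemma quotient_cyclic_logn (N : {group gT}) :
  N <| G -> logn p #|G| <= (logn p #|N|).+1 -> cyclic (G / N).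
Proof.
case/andP=> sNG nNG leGN; have pGN := quotient_pgroup N pG.
have lGN: logn p #|G| = (logn p #|N| + logn p #|G / N|)%N.
  by rewrite -(Lagrange sNG) card_quotient // lognM ?cardG_gt0 ?indexg_gt0.
have [lGN0 | lGN1] : logn p #|G / N| = 0%N \/ logn p #|G / N| = 1%N by lia.
  have /eqP->: G / N :==: 1 by rewrite trivg_card1 (card_pgroup pGN) lGN0.
  exact: cyclic1.
by apply: prime_cyclic; rewrite (card_pgroup pGN) lGN1.
Qed.

Lemma logn_center_nonabelian :
  ~~ abelian G -> (logn p #|'Z(G)|).+2 <= logn p #|G|.
Proof.
rewrite ltnNge; apply: contra => leGZ; apply: cyclic_center_factor_abelian.
exact: quotient_cyclic_logn (center_normal G) leGZ.
Qed.

Lemma logn_Phi_noncyclic :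
  ~~ cyclic G -> (logn p #|'Phi(G)|).+2 <= logn p #|G|.
Proof.
rewrite ltnNge; apply: contra => leGPhi; apply: Phi_quotient_cyclic.
exact: quotient_cyclic_logn (Phi_normal G) leGPhi.
Qed.

Lemma Phi_sub_center :
  nil_class G <= 2 -> exponent 'Z(G) %| p -> 'Phi(G) \subset 'Z(G).
Proof.
rewrite nil_class2 => sG'Z expZ.
rewrite (Phi_joing pG) join_subG sG'Z (MhoE 1 pG) gen_subG expn1.
apply/subsetP=> _ /imsetP[x Gx ->]; rewrite inE groupX //=.
apply/centP=> y Gy; have Zxy: [~ x, y] \in 'Z(G).
  by apply: (subsetP sG'Z); rewrite mem_commg.
have cxxy: commute x [~ x, y].
  by move/setIP: Zxy => [_ /centP cGxy]; apply/esym/cGxy.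
apply/commgP; rewrite (commXg p cxxy).
by case/dvdnP: expZ => k ->; rewrite mulnC expgM expg_exponent ?expg1n.
Qed.

End PGroup.

Section OrderP4.

Variables (gT : finGroupType) (p : nat) (G : {group gT}).
Hypotheses (pr_p : prime p) (oG : #|G| = (p ^ 4)%N).

Let pG : p.-group G. Proof. exact: (card_pfactor_pgroup pr_p oG).1. Qed.
Let lG : logn p #|G| = 4. Proof. exact: (card_pfactor_pgroup pr_p oG).2. Qed.

Lemma nonabelian_sub_p4 (H : {group gT}) :
  H \subset G -> ~~ abelian H -> H :=: G \/ maximal H G.
Proof.
move=> sHG nabH; have pH := pgroupS sHG pG.
have lHG: logn p #|H| <= 4 by rewrite -lG dvdn_leq_log ?cardSg.
have lH3 := logn_nonabelian_gt2 pH nabH.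
have [lH | lH]: logn p #|H| = 3 \/ logn p #|H| = 4 by lia.
  by right; apply: (sub_pgroup_maximal pr_p pG); rewrite ?lG ?lH.
by left; apply: (sub_pgroup_logn_eq pr_p pG); rewrite ?lG ?lH.
Qed.

Lemma nonab_selfcent_p4 :
  nonab_selfcent G <->
  (forall M : {group gT}, maximal M G -> ~~ abelian M -> 'Z(G) \subset M).
Proof.
have nsMG (M : {group gT}) : maximal M G -> M <| G := p_maximal_normal pG.
split=> [selfcG M maxM nabM | sZmax H sHG nabH].
  rewrite -(subcent_maximal_sub (nsMG M maxM) maxM) selfcG //.
  exact: proper_sub (maxgroupp maxM).
have [-> | maxH] := nonabelian_sub_p4 sHG nabH; first exact: subsetIl.
by rewrite subcent_maximal_sub ?nsMG ?sZmax.
Qed.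

Lemma nil_class_p4 : nil_class G <= 3.
Proof. by have := nil_class_pgroup pG; rewrite lG. Qed.

Lemma nil_class3_center_sub_maximal (M : {group gT}) :
  nil_class G = 3 -> maximal M G -> 'Z(G) \subset M.
Proof.
move=> clG3 maxM; apply/idPn => notsZM.
have pM := pgroupS (proper_sub (maxgroupp maxM)) pG.
have lM: logn p #|M| < 4.
  rewrite -lG -(ltn_exp2l _ _ (prime_gt1 pr_p)) -!card_pgroup //.
  exact: proper_card (maxgroupp maxM).
suff: nil_class G <= 2 by rewrite clG3.
apply: nil_class2_maximal_center (p_maximal_normal pG maxM) maxM notsZM _.
by have := nil_class_pgroup pM; lia.
Qed.

Lemma Phi_eq_center_p4 :
  ~~ abelian G -> nil_class G <= 2 ->
  (forall M : {group gT}, maximal M G -> 'Z(G) \subset M) ->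
  'Phi(G) = 'Z(G).
Proof.
move=> nabG clG2 sZmax; have sZPhi := center_sub_Phi sZmax.
have pZ := pgroupS (center_sub G) pG.
have leGZ := logn_center_nonabelian pr_p pG nabG.
have leGPhi := logn_Phi_noncyclic pr_p pG (contra (@cyclic_abelian _ G) nabG).
have lZ_gt0: 0 < logn p #|'Z(G)|.
  rewrite lt0n; apply: contraNneq nabG => lZ0.
  have: 'Z(G) :==: 1 by rewrite trivg_card1 (card_pgroup pZ) lZ0.
  by rewrite (center_nil_eq1 (pgroup_nil pG)) => /eqP->; apply: abelian1.
rewrite lG in leGZ leGPhi.
have [lZ | lZ]: logn p #|'Z(G)| = 2 \/ logn p #|'Z(G)| = 1%N by lia.
  apply/esym/(sub_pgroup_logn_eq pr_p (pgroupS (Phi_sub G) pG) sZPhi).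
  by rewrite lZ; exact: leGPhi.
apply/eqP; rewrite eqEsubset sZPhi andbT (Phi_sub_center pG) //.
by rewrite (dvdn_trans (exponent_dvdn _)) // (card_pgroup pZ) lZ.
Qed.

End OrderP4.

Theorem lemma6p9 (gT : finGroupType) (G : {group gT}) (p : nat) (hp : prime p) :
  ((#|G| = p \/ #|G| = (p ^ 2)%N \/ #|G| = (p ^ 3)%N) -> nonab_selfcent G) /\
  (#|G| = (p ^ 4)%N ->
     (nonab_selfcent G <->
        [\/ abelian G, nil_class G = 3 | 'Phi(G) = 'Z(G)])).
Proof.
split=> [oG H sHG nabH | oG].
  have [k le_k3 oGk]: exists2 k, k <= 3 & #|G| = (p ^ k)%N.
    case: oG => [->|[->|->]]; last by exists 3%N.
      by exists 1%N; rewrite ?expn1.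
    by exists 2%N.
  have [pG lG] := card_pfactor_pgroup hp oGk.
  rewrite (sub_pgroup_logn_eq hp pG sHG) ?subsetIl // lG.
  exact: leq_trans le_k3 (logn_nonabelian_gt2 (pgroupS sHG pG) nabH).
have [pG _] := card_pfactor_pgroup hp oG.
apply: iff_trans (nonab_selfcent_p4 hp oG) _; split=> [sZmax | ].
  have [abG | nabG] := boolP (abelian G); first exact: Or31.
  have [clG3 | clG_neq3] := eqVneq (nil_class G) 3; first exact: Or32.
  apply: Or33; apply: (Phi_eq_center_p4 hp oG nabG).
    by have := nil_class_p4 hp oG; lia.
  move=> M maxM; have [abM | nabM] := boolP (abelian M); last exact: sZmax.
  apply: contraNT nabG => notsZM.
  exact: abelian_maximal_center (p_maximal_normal pG maxM) maxM notsZM abM.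
case=> [abG | clG3 | PhiZ] M maxM nabM.
- by case/negP: nabM; apply: abelianS abG; apply: proper_sub (maxgroupp maxM).
- exact: (nil_class3_center_sub_maximal hp oG).
- by rewrite -PhiZ Phi_sub_max.
Qed.
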